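(* Let $q>2$ be a prime power, $R=M_2(\mathbb F_q)$, $U_R=\mathrm{GL}_2(\mathbb F_q)$, $\alpha\in(0,1)$, and let $\pi$ be the stationary distribution of the Markov chain $(X^U_t)$ on $R$ defined below. Let $D=q^3+q^2-q+(q^2-1)(q^2-q)\alpha$. Then \[\pi(x)=\begin{cases}\dfrac{\alpha}{D}, & x\in U_R,\\[2mm] \dfrac{q^2\alpha}{(1+(q^2-1)\alpha)\,D}, & x\notin U_R,\ x\ne0,\\[2mm] \dfrac{q^3+q^2-q-q(q^2-1)\alpha}{(1+(q^2-1)\alpha)\,D}, & x=0.\end{cases}\]
   Context: The chain $(X^U_t)$ on $R$: at each step an independent coin with Heads probability $\alpha$ is tossed; on Heads, $X_{t+1}=X_t+Y$ with $Y$ uniform on $R$; on Tails, $X_{t+1}=Z\cdot X_t$ with $Z$ uniform on $R$ (all independent). *)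

From HB Require Import structures.
From mathcomp Require Import all_boot all_order all_algebra all_field.
Set Implicit Arguments. Unset Strict Implicit. Unset Printing Implicit Defensive.
Import Order.TTheory GRing.Theory Num.Theory.
Local Open Scope ring_scope.

(* One-step transition probability of the chain X^U on M_2(F):
   with probability alpha, X_{t+1} = X_t + Y, Y uniform on M_2(F);
   with probability 1 - alpha, X_{t+1} = Z *m X_t, Z uniform on M_2(F). *)
Definition chainP (F : finFieldType) (R : realFieldType) (alpha : R)
    (x y : 'M[F]_2) : R :=
  alpha * (#|[pred Y : 'M[F]_2 | x + Y == y]|%:R / #|{: 'M[F]_2}|%:R)
  + (1 - alpha) * (#|[pred Z : 'M[F]_2 | Z *m x == y]|%:R / #|{: 'M[F]_2}|%:R).

Definition is_stationary (F : finFieldType) (R : realFieldType) (alpha : R)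
    (pi : 'M[F]_2 -> R) : Prop :=
  (forall x, 0 <= pi x) /\ (\sum_x pi x = 1) /\
  (forall y, pi y = \sum_x pi x * chainP alpha x y).

From HB Require Import structures.
From mathcomp Require Import all_boot all_order all_algebra all_field.
From mathcomp Require Import ring lra.
Import Order.TTheory GRing.Theory Num.Theory.
Set Implicit Arguments. Unset Strict Implicit. Unset Printing Implicit Defensive.
Local Open Scope ring_scope.

(* The chain has the Doeblin form  P x y = alpha / q^4 + (1 - alpha) N(x, y) / q^4,
   where N(x, y) counts the matrices Z with Z x = y.  On signed measures of total
   mass zero the uniform part vanishes and the stochastic part does not increase
   the l1 norm, so P contracts them by the factor 1 - alpha: the stationary
   distribution is unique, and it suffices to check the proposed one.
   Summing against N is invariant under y |-> g y h for invertible g, h as soon as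
   the measure is invariant under right multiplication, so it maps functions of
   the rank to functions of the rank.  On such a function its value is computed
   from N(x, y) = 1 for invertible x, N(x, y) = 0 for invertible y and singular x,
   N(x, 0) = q^2 for x of rank one and N(0, 0) = q^4; the value at rank one then
   follows from conservation of mass, and three linear identities in q and alpha
   remain. *)

Section DoeblinUniqueness.

Variables (T : finType) (R : realFieldType) (alpha : R) (mu : T -> R).
Variables (K P : T -> T -> R).
Hypotheses (alpha_gt0 : 0 < alpha) (alpha_le1 : alpha <= 1).
Hypothesis K_ge0 : forall x y, 0 <= K x y.
Hypothesis K_stochastic : forall x, \sum_y K x y = 1.
Hypothesis P_split : forall x y, P x y = alpha * mu y + (1 - alpha) * K x y.

Lemma invariant_measure_unique (pi1 pi2 : T -> R) :
  \sum_x pi1 x = \sum_x pi2 x ->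
  (forall y, pi1 y = \sum_x pi1 x * P x y) ->
  (forall y, pi2 y = \sum_x pi2 x * P x y) ->
  pi1 =1 pi2.
Proof.
move=> sum_eq inv1 inv2; pose d x := pi1 x - pi2 x.
have beta_ge0 : 0 <= 1 - alpha by rewrite subr_ge0.
have d_mass0 : \sum_x d x = 0 by rewrite sumrB sum_eq subrr.
have d_K y : d y = (1 - alpha) * \sum_x d x * K x y.
  have -> : d y = \sum_x d x * P x y.
    by rewrite /d {1}inv1 {1}inv2 -sumrB; apply: eq_bigr => x _; rewrite mulrBl.
  rewrite (eq_bigr (fun x => alpha * mu y * d x + (1 - alpha) * (d x * K x y))).
    by rewrite big_split /= -!mulr_sumr d_mass0 mulr0 add0r.
  by move=> x _; rewrite P_split; ring.
have contract : \sum_y `|d y| <= (1 - alpha) * \sum_y `|d y|.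
  apply: le_trans (_ : \sum_y (1 - alpha) * \sum_x `|d x| * K x y <= _).
    apply: ler_sum => y _; rewrite {1}d_K normrM ger0_norm // ler_wpM2l //.
    apply: le_trans (ler_norm_sum _ _ _) _; apply: ler_sum => x _.
    by rewrite normrM (ger0_norm (K_ge0 x y)).
  rewrite -mulr_sumr exchange_big /=.
  by under eq_bigr => x _ do rewrite -mulr_sumr K_stochastic mulr1.
have norm_d0 : \sum_y `|d y| = 0.
  apply/eqP; rewrite eq_le sumr_ge0 ?andbT // -(pmulr_rle0 _ alpha_gt0).
  by move: contract; rewrite mulrBl mul1r; lra.
move=> y; apply/eqP; rewrite -subr_eq0 -normr_eq0 -/(d y).
by rewrite (psumr_eq0P (fun x _ => normr_ge0 (d x)) norm_d0).
Qed.

End DoeblinUniqueness.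

Lemma card_preim_inj (T : finType) (f : T -> T) (A : pred T) :
  injective f -> #|[pred x | A (f x)]| = #|A|.
Proof. by move=> f_inj; rewrite -!sum1_card [RHS](reindex_inj f_inj). Qed.

Section LeftFactors.

Variables (F : finFieldType) (n : nat).
Implicit Types (x y g h : 'M[F]_n).

Definition nlfactors x y : nat := #|[pred Z : 'M[F]_n | Z *m x == y]|.

Lemma sum_nlfactors x : (\sum_y nlfactors x y = #|F| ^ (n * n))%N.
Proof.
rewrite -card_mx -sum1_card [RHS](partition_big (mulmxr x) predT) //=.
by apply: eq_bigr => y _; rewrite /nlfactors -sum1_card; apply: eq_bigl => Z; rewrite !inE.
Qed.

Lemma nlfactors_unit x y : x \in unitmx -> nlfactors x y = 1%N.
Proof.
move=> x_unit; rewrite -(card1 (y *m invmx x)); apply: eq_card => Z.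
by rewrite !inE; apply/eqP/eqP => [<-|->]; rewrite ?mulmxK ?mulmxKV.
Qed.

Lemma nlfactors_to_unit x y :
  y \in unitmx -> x \notin unitmx -> nlfactors x y = 0%N.
Proof.
move=> y_unit x_sing; apply: eq_card0 => Z; rewrite !inE.
apply/negbTE/eqP => Zx; move: y_unit.
by rewrite -Zx unitmx_mul (negbTE x_sing) andbF.
Qed.

Lemma nlfactors0 y : nlfactors 0 y = if y == 0 then (#|F| ^ (n * n))%N else 0%N.
Proof.
rewrite /nlfactors; case: eqP => [->|/eqP y_neq0].
  by rewrite -card_mx; apply: eq_card => Z; rewrite !inE mulmx0 eqxx.
by apply: eq_card0 => Z; rewrite !inE mulmx0 eq_sym (negbTE y_neq0).
Qed.

Lemma nlfactors_mull g x y : g \in unitmx -> nlfactors (g *m x) y = nlfactors x y.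
Proof.
move=> g_unit; rewrite /nlfactors.
rewrite -(card_preim_inj [pred Z | Z *m x == y] (can_inj (mulmxK g_unit))).
by apply: eq_card => Z; rewrite !inE /= mulmxA.
Qed.

Lemma nlfactors_mulr h x y :
  h \in unitmx -> nlfactors (x *m h) (y *m h) = nlfactors x y.
Proof.
by move=> h_unit; apply: eq_card => Z; rewrite !inE mulmxA (can_eq (mulmxK h_unit)).
Qed.

Lemma nlfactors_mull_target g x y :
  g \in unitmx -> nlfactors x (g *m y) = nlfactors x y.
Proof.
move=> g_unit; rewrite /nlfactors.
rewrite -(card_preim_inj [pred Z | Z *m x == y] (can_inj (mulKVmx g_unit))).
apply: eq_card => Z; rewrite !inE /= -mulmxA.
by rewrite (can2_eq (mulKVmx g_unit) (mulKmx g_unit)).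
Qed.

Lemma nlfactors_rank x : nlfactors x 0 = nlfactors (pid_mx (\rank x)) 0.
Proof.
rewrite -{1}(mulmx_ebase x) -(mul0mx n (row_ebase x)).
by rewrite nlfactors_mulr ?row_ebase_unit // mul0mx nlfactors_mull ?col_ebase_unit.
Qed.

End LeftFactors.

Lemma nlfactors_pid0 (F : finFieldType) (r m : nat) :
  nlfactors (pid_mx r : 'M[F]_(r + m)) 0 = (#|F| ^ ((r + m) * m))%N.
Proof.
have mul_pid (Z : 'M[F]_(r + m)) :
    Z *m (pid_mx r : 'M_(r + m)) = row_mx (lsubmx Z) (0 : 'M_(r + m, m)).
  rewrite -{1}(hsubmxK Z) (pid_mx_block _ m m r) mul_row_block.
  by rewrite mulmx1 !mulmx0 addr0 add0r.
rewrite -card_mx -cardsT -(card_imset _ (can_inj (@row_mxKr F (r + m) r m 0))).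
apply: eq_card => Z; rewrite !inE mul_pid row_mx_eq0 eqxx andbT.
apply/eqP/imsetP => [Zl0 | [B _ ->]]; last by rewrite row_mxKl.
by exists (rsubmx Z); rewrite ?inE // -{1}(hsubmxK Z) Zl0.
Qed.

Section LeftMultiplicationPush.

Variables (F : finFieldType) (n : nat) (R : comPzRingType).
Implicit Types (f : 'M[F]_n -> R) (x y g h : 'M[F]_n).

Definition push_lmul f y : R := \sum_x f x * (nlfactors x y)%:R.

Definition right_unit_invariant f :=
  forall x h, h \in unitmx -> f (x *m h) = f x.

Lemma push_lmul_mull f g y :
  g \in unitmx -> push_lmul f (g *m y) = push_lmul f y.
Proof. by move=> g_unit; apply: eq_bigr => x _; rewrite nlfactors_mull_target. Qed.

Lemma push_lmul_mulr f h y : right_unit_invariant f ->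
  h \in unitmx -> push_lmul f (y *m h) = push_lmul f y.
Proof.
move=> f_inv h_unit; rewrite /push_lmul (reindex_inj (can_inj (mulmxK h_unit))) /=.
by apply: eq_bigr => x _; rewrite f_inv // nlfactors_mulr.
Qed.

Lemma push_lmul_rank f y : right_unit_invariant f ->
  push_lmul f y = push_lmul f (pid_mx (\rank y)).
Proof.
move=> f_inv; rewrite -{1}(mulmx_ebase y).
by rewrite push_lmul_mulr ?row_ebase_unit // push_lmul_mull ?col_ebase_unit.
Qed.

Lemma sum_push_lmul f :
  \sum_y push_lmul f y = (#|F| ^ (n * n))%:R * \sum_x f x.
Proof.
rewrite exchange_big /= mulr_sumr; apply: eq_bigr => x _.
by rewrite -mulr_sumr -natr_sum sum_nlfactors mulrC.
Qed.

End LeftMultiplicationPush.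

Lemma card_addr_eq (V : finZmodType) (x y : V) : #|[pred Y : V | x + Y == y]| = 1%N.
Proof.
rewrite -(card1 (y - x)); apply: eq_card => Y; rewrite !inE.
by apply/eqP/eqP => [<-|->]; rewrite addrC ?addKr ?subrK.
Qed.

Lemma rank_nonunit2 (F : fieldType) (x : 'M[F]_2) :
  x \notin unitmx -> x != 0 -> \rank x = 1%N.
Proof.
rewrite -row_full_unit /row_full -mxrank_eq0.
by have := rank_leq_col x; case: (\rank x) => [|[|[|]]].
Qed.

Definition rank_class (F : finFieldType) (T : Type) (a b c : T) (x : 'M[F]_2) : T :=
  if x \in unitmx then a else if x != 0 then b else c.

Section RankClasses.

Variables (F : finFieldType) (R : comPzRingType).
Implicit Types (a b c : R) (x : 'M[F]_2).
Local Notation q := #|F|.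
Local Notation nunit := #|[pred x : 'M[F]_2 | x \in unitmx]|.
Local Notation nrank1 := #|[pred x : 'M[F]_2 | (x \notin unitmx) && (x != 0)]|.

Lemma rank_class_mulr a b c :
  right_unit_invariant (rank_class a b c : 'M[F]_2 -> R).
Proof.
move=> x h h_unit; rewrite /rank_class unitmx_mul h_unit andbT.
by rewrite -{1}(mul0mx 2 h) (can_eq (mulmxK h_unit)).
Qed.

Lemma rank_classM a b c a' b' c' x :
  rank_class a b c x * rank_class a' b' c' x = rank_class (a * a') (b * b') (c * c') x.
Proof. by rewrite /rank_class; case: ifP => _ //; case: ifP. Qed.

Lemma sum_rank_class a b c :
  \sum_(x : 'M[F]_2) rank_class a b c x = a * nunit%:R + b * nrank1%:R + c.
Proof.
have zero_sing : (0 : 'M[F]_2) \notin unitmx by rewrite unitmxE det0 unitr0.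
have sum_unit : \sum_(x : 'M[F]_2 | x \in unitmx) rank_class a b c x = a * nunit%:R.
  rewrite mulr_natr -sumr_const.
  by apply: eq_big => [x | x x_unit]; rewrite ?inE // /rank_class x_unit.
have sum_rank1 :
    \sum_(x : 'M[F]_2 | (x \notin unitmx) && (x != 0)) rank_class a b c x
      = b * nrank1%:R.
  rewrite mulr_natr -sumr_const.
  apply: eq_big => [x | x /andP[/negbTE x_sing x_neq0]]; first by rewrite inE.
  by rewrite /rank_class x_sing x_neq0.
rewrite (bigID (mem unitmx)) /= [X in _ + X](bigD1 0) //= sum_unit sum_rank1.
by rewrite /rank_class (negbTE zero_sing) eqxx /= addrA addrAC.
Qed.

Lemma card_unitmx2 :
  (nunit%:R : R) = (q%:R ^+ 2 - 1) * (q%:R ^+ 2 - q%:R).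
Proof.
have -> : nunit = (q * q.-1 ^ 2 * q.+1)%N.
  by rewrite -card_GL_2 cardsT card_sub; apply: eq_card.
have q_gt0 : (0 < q)%N := ltnW (card_finNzRing_gt1 F).
rewrite !natrM -subn1 natrB // -addn1 natrD; ring.
Qed.

Lemma card_rank1_mx2 :
  (nrank1%:R : R) = q%:R ^+ 4 - 1 - (q%:R ^+ 2 - 1) * (q%:R ^+ 2 - q%:R).
Proof.
have := sum_rank_class 1 1 1; rewrite card_unitmx2 (eq_bigr (fun _ => 1)).
  rewrite sumr_const card_mx natrX !mul1r => ->; ring.
by move=> x _; rewrite /rank_class; case: ifP => //; case: ifP.
Qed.

Lemma push_lmul_mx2 (f : 'M[F]_2 -> R) : right_unit_invariant f ->
  push_lmul f =1 rank_class (push_lmul f 1) (push_lmul f (pid_mx 1)) (push_lmul f 0).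
Proof.
move=> f_inv y; rewrite /rank_class; case: ifP => [y_unit | y_sing].
  by rewrite (push_lmul_rank y) // (push_lmul_rank 1) // mxrank1 mxrank_unit.
case: ifP => [y_neq0 | /negbFE/eqP -> //].
by rewrite push_lmul_rank // rank_nonunit2 ?y_sing.
Qed.

Lemma push_rank_class_unit a b c :
  push_lmul (rank_class a b c : 'M[F]_2 -> R) 1 = a * nunit%:R.
Proof.
have N1 x : (nlfactors x 1)%:R = rank_class 1 0 0 x :> R.
  rewrite /rank_class; case: ifP => [x_unit | /negbT x_sing].
    by rewrite nlfactors_unit.
  by rewrite nlfactors_to_unit ?unitmx1 //; case: ifP.
rewrite /push_lmul (eq_bigr (fun x => rank_class (a * 1) (b * 0) (c * 0) x)).
  by rewrite sum_rank_class !mulr0 mul0r !addr0 mulr1.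
by move=> x _; rewrite N1 rank_classM.
Qed.

Lemma push_rank_class0 a b c :
  push_lmul (rank_class a b c : 'M[F]_2 -> R) 0
  = a * nunit%:R + b * q%:R ^+ 2 * nrank1%:R + c * q%:R ^+ 4.
Proof.
have N0 x : (nlfactors x 0)%:R = rank_class 1 (q%:R ^+ 2) (q%:R ^+ 4) x :> R.
  rewrite /rank_class; case: ifP => [x_unit | /negbT x_sing].
    by rewrite nlfactors_unit.
  case: ifP => [x_neq0 | /negbFE/eqP ->]; last by rewrite nlfactors0 eqxx natrX.
  by rewrite nlfactors_rank rank_nonunit2 // (nlfactors_pid0 F 1 1) natrX.
rewrite /push_lmul.
rewrite (eq_bigr (fun x => rank_class (a * 1) (b * q%:R ^+ 2) (c * q%:R ^+ 4) x)).
  by rewrite sum_rank_class mulr1.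
by move=> x _; rewrite N0 rank_classM.
Qed.

Lemma push_rank_class a b c :
  push_lmul (rank_class a b c : 'M[F]_2 -> R) =1
  rank_class (a * nunit%:R) (push_lmul (rank_class a b c : 'M[F]_2 -> R) (pid_mx 1))
    (a * nunit%:R + b * q%:R ^+ 2 * nrank1%:R + c * q%:R ^+ 4).
Proof.
move=> y; rewrite push_lmul_mx2 ?push_rank_class_unit ?push_rank_class0 //.
exact: rank_class_mulr.
Qed.

End RankClasses.

Definition pi_denom (R : pzRingType) (q alpha : R) : R :=
  q ^+ 3 + q ^+ 2 - q + (q ^+ 2 - 1) * (q ^+ 2 - q) * alpha.

Definition pi_unit (R : fieldType) (q alpha : R) : R := alpha / pi_denom q alpha.

Definition pi_rank1 (R : fieldType) (q alpha : R) : R :=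
  q ^+ 2 * alpha / ((1 + (q ^+ 2 - 1) * alpha) * pi_denom q alpha).

Definition pi_zero (R : fieldType) (q alpha : R) : R :=
  (q ^+ 3 + q ^+ 2 - q - q * (q ^+ 2 - 1) * alpha)
  / ((1 + (q ^+ 2 - 1) * alpha) * pi_denom q alpha).

Section PiValues.

Variables (R : realFieldType) (q alpha : R).
Hypotheses (q_gt1 : 1 < q) (alpha_ge0 : 0 <= alpha) (alpha_le1 : alpha <= 1).
Local Notation a := (pi_unit q alpha).
Local Notation b := (pi_rank1 q alpha).
Local Notation c := (pi_zero q alpha).
Local Notation u := ((q ^+ 2 - 1) * (q ^+ 2 - q)).
Local Notation Q := (q ^+ 4).

Let q_gt0 : 0 < q. Proof. exact: lt_trans ltr01 q_gt1. Qed.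
Let q2_gtq : q < q ^+ 2. Proof. by rewrite expr2 ltr_pMr. Qed.
Let q2_gt1 : 1 < q ^+ 2. Proof. exact: lt_trans q2_gtq. Qed.
Let q2B1_gt0 : 0 < q ^+ 2 - 1. Proof. by rewrite subr_gt0. Qed.
Let qS_gt0 : 0 < q + 1. Proof. by rewrite addr_gt0. Qed.
Let u_gt0 : 0 < u. Proof. by rewrite mulr_gt0 // subr_gt0. Qed.
Let mixing_gt0 : 0 < 1 + (q ^+ 2 - 1) * alpha.
Proof.
have : 0 <= (q ^+ 2 - 1) * alpha by apply: mulr_ge0; rewrite // subr_ge0 ltW.
lra.
Qed.
Let denom_gt0 : 0 < pi_denom q alpha.
Proof.
have : 0 <= u * alpha by apply: mulr_ge0; rewrite // ltW.
have : 0 < q ^+ 3 by rewrite exprn_gt0.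
have := q2_gtq; rewrite /pi_denom; lra.
Qed.
Let rank1_count : Q - 1 - u = (q ^+ 2 - 1) * (q + 1). Proof. by ring. Qed.

Lemma pi_values_ge0 : [/\ 0 <= a, 0 <= b & 0 <= c].
Proof.
have ED_gt0 := mulr_gt0 mixing_gt0 denom_gt0.
split; apply: divr_ge0; rewrite ?(ltW denom_gt0) ?(ltW ED_gt0) //.
  by apply: mulr_ge0; rewrite // exprn_ge0 // ltW.
have -> : q ^+ 3 + q ^+ 2 - q - q * (q ^+ 2 - 1) * alpha
          = q ^+ 2 + q * (q ^+ 2 - 1) * (1 - alpha) by ring.
apply: addr_ge0; first by rewrite exprn_ge0 // ltW.
by rewrite !mulr_ge0 ?subr_ge0 // ltW // subr_gt0.
Qed.

Lemma pi_values_mass : a * u + b * (Q - 1 - u) + c = 1.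
Proof.
by rewrite rank1_count /pi_unit /pi_rank1 /pi_zero /pi_denom; field; rewrite !gt_eqF.
Qed.

Lemma pi_unit_balance : a = alpha / Q + (1 - alpha) / Q * (a * u).
Proof. by rewrite /pi_unit /pi_denom; field; rewrite !gt_eqF. Qed.

Lemma pi_zero_balance :
  c = alpha / Q + (1 - alpha) / Q * (a * u + b * q ^+ 2 * (Q - 1 - u) + c * Q).
Proof.
rewrite rank1_count /pi_unit /pi_rank1 /pi_zero /pi_denom.
by field; rewrite !gt_eqF.
Qed.

Lemma pi_rank1_balance f1 :
  a * u * u + f1 * (Q - 1 - u) + (a * u + b * q ^+ 2 * (Q - 1 - u) + c * Q) = Q ->
  b = alpha / Q + (1 - alpha) / Q * f1.
Proof.
rewrite rank1_count => mass_eq.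
have s_neq0 : (q ^+ 2 - 1) * (q + 1) != 0 by rewrite gt_eqF ?mulr_gt0.
have -> : f1 = (Q - a * u * u - (a * u + b * q ^+ 2 * ((q ^+ 2 - 1) * (q + 1)) + c * Q))
               / ((q ^+ 2 - 1) * (q + 1)).
  by apply: (canRL (mulfK s_neq0)); move: mass_eq; lra.
rewrite /pi_unit /pi_rank1 /pi_zero /pi_denom.
by field; rewrite !gt_eqF.
Qed.

End PiValues.

Section Stationary.

Variables (F : finFieldType) (R : realFieldType) (alpha : R).
Hypotheses (alpha_gt0 : 0 < alpha) (alpha_lt1 : alpha < 1).
Local Notation q := (#|F|%:R : R).
Local Notation pi0 :=
  (rank_class (pi_unit q alpha) (pi_rank1 q alpha) (pi_zero q alpha) : 'M[F]_2 -> R).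

Let q_gt1 : 1 < q. Proof. by rewrite ltr1n card_finNzRing_gt1. Qed.
Let q_neq0 : q != 0. Proof. by rewrite gt_eqF // (lt_trans ltr01). Qed.

Lemma chainPE (x y : 'M[F]_2) :
  chainP alpha x y = alpha * (q ^+ 4)^-1 + (1 - alpha) * ((nlfactors x y)%:R / q ^+ 4).
Proof. by rewrite /chainP card_addr_eq card_mx natrX div1r. Qed.

Lemma sum_chainP (pi : 'M[F]_2 -> R) (y : 'M[F]_2) :
  \sum_x pi x * chainP alpha x y
  = alpha / q ^+ 4 * \sum_x pi x + (1 - alpha) / q ^+ 4 * push_lmul pi y.
Proof.
rewrite /push_lmul !mulr_sumr -big_split; apply: eq_bigr => x _ /=.
by rewrite chainPE; field.
Qed.

Lemma rank_class_stationary : is_stationary alpha pi0.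
Proof.
have alpha_ge0 := ltW alpha_gt0; have alpha_le1 := ltW alpha_lt1.
have [a_ge0 b_ge0 c_ge0] := pi_values_ge0 q_gt1 alpha_ge0 alpha_le1.
have mass1 : \sum_x pi0 x = 1.
  rewrite sum_rank_class card_unitmx2 card_rank1_mx2.
  exact: pi_values_mass q_gt1 alpha_ge0.
split; [by move=> x; rewrite /rank_class; case: ifP => _ //; case: ifP | split=> // y].
rewrite sum_chainP mass1 mulr1 push_rank_class card_unitmx2 card_rank1_mx2.
set f1 := push_lmul _ (pid_mx 1); rewrite /rank_class; case: ifP => _.
  exact: pi_unit_balance q_gt1 alpha_ge0.
case: ifP => _; last exact: pi_zero_balance q_gt1 alpha_ge0.
apply: pi_rank1_balance q_gt1 alpha_ge0 _ _.
have := sum_push_lmul pi0; rewrite mass1 mulr1 natrX.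
under eq_bigr => x _ do rewrite push_rank_class -/f1.
by rewrite sum_rank_class card_unitmx2 card_rank1_mx2.
Qed.

Lemma stationary_rank_classP (pi : 'M[F]_2 -> R) : is_stationary alpha pi <-> pi =1 pi0.
Proof.
have [pi0_ge0 [mass0 inv0]] := rank_class_stationary.
split=> [[_ [mass inv]] | pi_eq].
  apply: (invariant_measure_unique (alpha := alpha) (mu := fun=> (q ^+ 4)^-1)
            (K := fun x y => (nlfactors x y)%:R / q ^+ 4)) inv inv0 => //.
  - exact: ltW.
  - by move=> x y; rewrite divr_ge0 ?exprn_ge0 ?ler0n.
  - move=> x; rewrite -mulr_suml -natr_sum sum_nlfactors natrX mulfV //.
    by rewrite expf_neq0.
  - by move=> x y; rewrite chainPE.
  - by rewrite mass mass0.
split=> [x | ]; first by rewrite pi_eq.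
rewrite (eq_bigr _ (fun x _ => pi_eq x)); split=> // y.
by rewrite pi_eq inv0; apply: eq_bigr => x _; rewrite pi_eq.
Qed.

End Stationary.

Unset Implicit Arguments. Set Strict Implicit.

Theorem proposition5p2 (F : finFieldType) (q : nat) (R : realFieldType)
    (alpha : R) :
  #|F| = q -> (2 < q)%N -> 0 < alpha -> alpha < 1 ->
  let D := (q%:R ^+ 3 + q%:R ^+ 2 - q%:R
            + (q%:R ^+ 2 - 1) * (q%:R ^+ 2 - q%:R) * alpha : R) in
  forall pi : 'M[F]_2 -> R,
    is_stationary alpha pi <->
    (forall x : 'M[F]_2,
       pi x = if x \in unitmx then alpha / D
              else if x != 0 then
                q%:R ^+ 2 * alpha / ((1 + (q%:R ^+ 2 - 1) * alpha) * D)
              else (q%:R ^+ 3 + q%:R ^+ 2 - q%:R - q%:R * (q%:R ^+ 2 - 1) * alpha)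
                   / ((1 + (q%:R ^+ 2 - 1) * alpha) * D)).
Proof.
move=> <- _ alpha_gt0 alpha_lt1 D pi.
exact: stationary_rank_classP.
Qed.
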